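(* Let $\tau$ be a strongly $(n,p;a,c)$ regular graph with $0<c<p<n-1$, whose adjacency matrix has eigenvalues $p$, $r$ and $s$, where $r=\frac{a-c+\sqrt{(a-c)^2+4(p-c)}}{2}$ and $s=\frac{a-c-\sqrt{(a-c)^2+4(p-c)}}{2}$. Then \begin{align*} &(rn+p-r)^3+(-n+p-r)^3p+(p-r)^3(n-p-1)\ge 0,\\ &(rn+p-s)^3+(-n+p-s)^3p+(p-s)^3(n-p-1)\ge 0,\\ &(rn+p-r)^2(rn+p-s)+(-n+p-r)^2(-n+p-s)p+(p-r)^2(p-s)(n-p-1)\ge 0,\\ &(rn+p-r)(rn+p-s)^2+(-n+p-r)(-n+p-s)^2p+(p-r)(p-s)^2(n-p-1)\ge 0,\\ &(|s|n+s-p)^2(rn+p-s)+(n+s-p)^2(-n+p-s)p+(s-p)^2(p-s)(n-p-1)\ge 0. \end{align*}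
   Context: A graph is strongly $(n,p;a,c)$ regular if it is a simple graph on $n$ vertices, not complete and not null, every vertex has exactly $p$ neighbours, every pair of adjacent vertices has exactly $a$ common neighbours, and every pair of distinct non-adjacent vertices has exactly $c$ common neighbours. *)

From HB Require Import structures.
From mathcomp Require Import all_boot all_order all_algebra.
Set Implicit Arguments. Unset Strict Implicit. Unset Printing Implicit Defensive.
Import Order.TTheory GRing.Theory Num.Theory.

Definition strongly_regular (T : finType) (e : rel T) (n p a c : nat) : Prop :=
  symmetric e /\ irreflexive e /\ #|T| = n /\
      (exists x y, e x y) /\
      (exists x y, x != y /\ ~~ e x y) /\
      (forall x, #|[set y | e x y]| = p) /\
      (forall x y, x != y -> e x y -> #|[set z | e x z && e y z]| = a) /\
    (forall x y, x != y -> ~~ e x y -> #|[set z | e x z && e y z]| = c).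

Local Open Scope ring_scope.

Definition srg_r (R : rcfType) (p a c : nat) : R :=
  ((a%:R - c%:R) + Num.sqrt ((a%:R - c%:R) ^+ 2 + 4 * (p%:R - c%:R))) / 2.
Definition srg_s (R : rcfType) (p a c : nat) : R :=
  ((a%:R - c%:R) - Num.sqrt ((a%:R - c%:R) ^+ 2 + 4 * (p%:R - c%:R))) / 2.

From HB Require Import structures.
From mathcomp Require Import all_boot all_order all_algebra.
From mathcomp Require Import ring.
Import Order.TTheory GRing.Theory Num.Theory.
Set Implicit Arguments. Unset Strict Implicit. Unset Printing Implicit Defensive.
Local Open Scope ring_scope.

(* Let A be the adjacency matrix, J the all-ones matrix and r > s the two non-principal
   eigenvalues. In the Bose-Mesner algebra the matrices rn I - n A + (p - r) J,
   rn I - n A + (p - s) J and sn I - n A + (p - s) J are n(r - s) E_s, n(r - s)(E_0 + E_s)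
   and n(s - r) E_r, where the E are the eigenprojections, so each satisfies K^2 = l K.
   A symmetric K with K^2 = l K is l^-1 times a Gram matrix, hence the entrywise product
   of three of them is (l1 l2 l3)^-1 times a Gram matrix, whose entry sum is a sum of
   squares. When l1 l2 l3 > 0 that entry sum is therefore nonnegative; computing it from
   the values of the kernels on the diagonal, on edges and on non-edges gives each
   inequality. *)

Lemma sumr_delta_l (R : nzSemiRingType) (T : finType) (x : T) (g : T -> R) :
  \sum_z (x == z)%:R * g z = g x.
Proof.
rewrite (bigD1 x) //= eqxx mul1r big1 ?addr0 // => z /negbTE.
by rewrite eq_sym => ->; rewrite mul0r.
Qed.

Lemma sumr_delta_r (R : nzSemiRingType) (T : finType) (x : T) (g : T -> R) :
  \sum_z g z * (z == x)%:R = g x.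
Proof.
rewrite -[RHS](sumr_delta_l x); apply: eq_bigr => z _.
by rewrite eq_sym mulr_natr mulr_natl.
Qed.

Lemma sumr_delta1 (R : nzSemiRingType) (T : finType) (x : T) :
  \sum_z (x == z)%:R = 1 :> R.
Proof.
by rewrite (bigD1 x) //= eqxx big1 ?addr0 // => z; rewrite eq_sym => /negbTE ->.
Qed.

Lemma sumr_indicator (R : nzSemiRingType) (T : finType) (b : pred T) :
  \sum_z (b z)%:R = #|[set z | b z]|%:R :> R.
Proof.
rewrite -sum1_card natr_sum [in RHS]big_mkcond /=; apply: eq_bigr => z _ /=.
by rewrite inE; case: (b z).
Qed.

Lemma sum_mul_pair (R : nzSemiRingType) (I J : finType) (a : I -> R) (b : J -> R) :
  (\sum_i a i) * (\sum_j b j) = \sum_(q : I * J) a q.1 * b q.2.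
Proof. by rewrite big_distrlr -(pair_bigA _ (fun i j => a i * b j)). Qed.

Definition scaled_idempotent (R : nzSemiRingType) (T : finType) (K : T -> T -> R) (l : R) :=
  forall x y, \sum_z K x z * K z y = l * K x y.

Section BoseMesner.

Variables (R : comNzRingType) (T : finType) (e : rel T).

Definition bose_mesner (u v w : R) (x y : T) : R :=
  u * (x == y)%:R + v * (e x y)%:R + w.

Hypothesis e_irr : irreflexive e.
Hypothesis e_sym : symmetric e.

Lemma bose_mesnerE u v w x y :
  bose_mesner u v w x y = if x == y then u + w else if e x y then v + w else w.
Proof.
rewrite /bose_mesner; case: eqP => [->|_]; first by rewrite e_irr /=; ring.
by case: (e x y) => /=; ring.
Qed.

Lemma bose_mesner_sym u v w x y : bose_mesner u v w x y = bose_mesner u v w y x.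
Proof. by rewrite /bose_mesner eq_sym e_sym. Qed.

Variables (P A C N : R).
Hypothesis adj_row : forall x, \sum_z (e x z)%:R = P.
Hypothesis adj_sqr :
  forall x y, \sum_z (e x z)%:R * (e z y)%:R = bose_mesner (P - C) (A - C) C x y.
Hypothesis card_T : #|T|%:R = N.

Lemma sumr_const_card (k : R) : \sum_(z : T) k = k * N.
Proof. by rewrite sumr_const -mulr_natr -card_T. Qed.

Lemma bose_mesner_row u v w x : \sum_y bose_mesner u v w x y = u + v * P + w * N.
Proof.
by rewrite !big_split /= -!big_distrr /= adj_row sumr_const_card sumr_delta1 mulr1.
Qed.

Lemma bose_mesner_mul u v w u' v' w' x y :
  \sum_z bose_mesner u v w x z * bose_mesner u' v' w' z y =
  bose_mesner (u * u' + v * v' * (P - C))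
              (u * v' + v * u' + v * v' * (A - C))
              (u * w' + w * u' + (v * w' + w * v') * P + v * v' * C + w * w' * N) x y.
Proof.
pose d (x y : T) : R := (x == y)%:R; pose a (x y : T) : R := (e x y)%:R.
have expand z : bose_mesner u v w x z * bose_mesner u' v' w' z y =
    u * u' * (d x z * d z y) + u * v' * (d x z * a z y) + v * u' * (a x z * d z y)
  + v * v' * (a x z * a z y) + u * w' * d x z + w * u' * d y z + v * w' * a x z
  + w * v' * a y z + w * w'.
  by rewrite /bose_mesner /a /d (e_sym y z) (eq_sym y z); ring.
rewrite (eq_bigr _ (fun z _ => expand z)) !big_split /= -!big_distrr /=.
rewrite sumr_delta_l sumr_delta_l sumr_delta_r adj_sqr !adj_row sumr_const_card !sumr_delta1.
by rewrite /bose_mesner /d /a; ring.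
Qed.

Lemma bose_mesner_param (x0 : T) : P * P = P - C + (A - C) * P + C * N.
Proof.
rewrite -(bose_mesner_row (P - C) (A - C) C x0) -(eq_bigr _ (fun y _ => adj_sqr x0 y)).
rewrite exchange_big /=; under eq_bigr do rewrite -big_distrr /= adj_row.
by rewrite -big_distrl /= adj_row.
Qed.

Lemma bose_mesner_sqr (x0 : T) t t' w :
    t + t' = A - C -> t * t' = C - P -> w = P - t \/ w = P - t' ->
  scaled_idempotent (bose_mesner (t * N) (- N) w) (N * (t - t')).
Proof.
move=> tt'_sum tt'_prod w_eq x y; rewrite bose_mesner_mul.
have CN : C * N = (P - t) * (P - t').
  have -> : (P - t) * (P - t') = P * P - (t + t') * P + t * t' by ring.
  by rewrite (bose_mesner_param x0) tt'_sum tt'_prod; ring.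
have w_root : (w - (P - t)) * (w - (P - t')) = 0.
  by case: w_eq => ->; rewrite subrr ?mul0r ?mulr0.
have -> : N * (t - t') * bose_mesner (t * N) (- N) w x y =
    bose_mesner (N * (t - t') * (t * N)) (N * (t - t') * - N) (N * (t - t') * w) x y.
  by rewrite /bose_mesner; ring.
congr bose_mesner.
- by rewrite -[P - C]opprB -tt'_prod; ring.
- by rewrite -tt'_sum; ring.
- (* the J-coefficient: N times the quadratic vanishing at w = P - t, P - t' *)
  transitivity (N * ((w - (P - t)) * (w - (P - t')) + (C * N - (P - t) * (P - t')))
                + N * (t - t') * w); first by ring.
  by rewrite w_root CN subrr addr0 mulr0 add0r.
Qed.

Lemma sum_bose_mesner_hadamard u1 v1 w1 u2 v2 w2 u3 v3 w3 :
  \sum_x \sum_y bose_mesner u1 v1 w1 x y * bose_mesner u2 v2 w2 x y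
                * bose_mesner u3 v3 w3 x y =
  N * ((u1 + w1) * (u2 + w2) * (u3 + w3) + (v1 + w1) * (v2 + w2) * (v3 + w3) * P
       + w1 * w2 * w3 * (N - P - 1)).
Proof.
set k0 := (u1 + w1) * _ * _; set k1 := (v1 + w1) * _ * _; set k2 := w1 * w2 * w3.
have hadamard x y : bose_mesner u1 v1 w1 x y * bose_mesner u2 v2 w2 x y
                    * bose_mesner u3 v3 w3 x y = bose_mesner (k0 - k2) (k1 - k2) k2 x y.
  by rewrite !bose_mesnerE /k0 /k1 /k2; case: (x == y); [|case: (e x y)]; ring.
under eq_bigr do under eq_bigr do rewrite hadamard.
under eq_bigr do rewrite bose_mesner_row.
by rewrite sumr_const_card; ring.
Qed.

End BoseMesner.

Section Krein.

Variables (R : realFieldType) (T : finType).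

Lemma sum_gram_ge0 (I : finType) (f : I -> T -> R) :
  0 <= \sum_x \sum_y \sum_i f i x * f i y.
Proof.
under eq_bigr do rewrite exchange_big /=.
rewrite exchange_big /=; apply: sumr_ge0 => i _.
by rewrite -big_distrlr /= -expr2 sqr_ge0.
Qed.

Lemma scaled_idempotent_gram (K : T -> T -> R) l :
    l != 0 -> (forall x y, K x y = K y x) -> scaled_idempotent K l ->
  forall x y, K x y = l^-1 * \sum_z K x z * K y z.
Proof.
move=> l_neq0 K_sym K_idem x y.
under eq_bigr => z _ do rewrite (K_sym y z).
by rewrite K_idem mulKf.
Qed.

Lemma krein_sum_ge0 (K1 K2 K3 : T -> T -> R) l1 l2 l3 :
    (forall x y, K1 x y = K1 y x) -> (forall x y, K2 x y = K2 y x) ->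
    (forall x y, K3 x y = K3 y x) ->
    scaled_idempotent K1 l1 -> scaled_idempotent K2 l2 -> scaled_idempotent K3 l3 ->
    0 < l1 * l2 * l3 ->
  0 <= \sum_x \sum_y K1 x y * K2 x y * K3 x y.
Proof.
move=> sym1 sym2 sym3 idem1 idem2 idem3 l_gt0.
have /and3P[l1_neq0 l2_neq0 l3_neq0] : [&& l1 != 0, l2 != 0 & l3 != 0].
  by move: (lt0r_neq0 l_gt0); rewrite !mulf_eq0 !negb_or => /andP[/andP[-> ->] ->].
pose f (i : T * T * T) x := K1 x i.1.1 * K2 x i.1.2 * K3 x i.2.
have gram x y : K1 x y * K2 x y * K3 x y = (l1 * l2 * l3)^-1 * \sum_i f i x * f i y.
  rewrite (scaled_idempotent_gram l1_neq0 sym1 idem1) (scaled_idempotent_gram l2_neq0 sym2 idem2).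
  rewrite (scaled_idempotent_gram l3_neq0 sym3 idem3).
  have -> : \sum_i f i x * f i y = (\sum_z K1 x z * K1 y z) * (\sum_z K2 x z * K2 y z)
                                  * (\sum_z K3 x z * K3 y z).
    by rewrite !sum_mul_pair; apply: eq_bigr => i _; rewrite /f; ring.
  by rewrite !invfM; ring.
under eq_bigr do under eq_bigr do rewrite gram.
under eq_bigr do rewrite -big_distrr /=.
by rewrite -big_distrr /= mulr_ge0 ?sum_gram_ge0 ?invr_ge0 ?ltW.
Qed.

End Krein.

Lemma bose_mesner_krein (R : realFieldType) (T : finType) (e : rel T) (P N : R)
    {u1 v1 w1 u2 v2 w2 u3 v3 w3 l1 l2 l3 : R} :
    irreflexive e -> symmetric e -> (forall x, \sum_z (e x z)%:R = P) ->
    #|T|%:R = N -> 0 < N ->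
    scaled_idempotent (bose_mesner e u1 v1 w1) l1 ->
    scaled_idempotent (bose_mesner e u2 v2 w2) l2 ->
    scaled_idempotent (bose_mesner e u3 v3 w3) l3 ->
    0 < l1 * l2 * l3 ->
  0 <= (u1 + w1) * (u2 + w2) * (u3 + w3) + (v1 + w1) * (v2 + w2) * (v3 + w3) * P
       + w1 * w2 * w3 * (N - P - 1).
Proof.
move=> e_irr e_sym adj_row card_T N_gt0 idem1 idem2 idem3 l_gt0.
rewrite -(pmulr_rge0 _ N_gt0) -(sum_bose_mesner_hadamard e_irr adj_row card_T).
by apply: (krein_sum_ge0 _ _ _ idem1 idem2 idem3) => // x y; apply: bose_mesner_sym.
Qed.

Lemma strongly_regular_adjacency (R : comNzRingType) (T : finType) (e : rel T) n p a c :
    strongly_regular e n p a c ->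
  [/\ irreflexive e, symmetric e, forall x, \sum_z (e x z)%:R = p%:R :> R,
      forall x y, \sum_z (e x z)%:R * (e z y)%:R =
                  bose_mesner e (p%:R - c%:R) (a%:R - c%:R) c%:R x y :> R
    & #|T| = n].
Proof.
case=> e_sym [e_irr [card_T [_ [_ [deg [adj_common nadj_common]]]]]].
split=> // [x|x y]; first by rewrite sumr_indicator deg.
under eq_bigr do rewrite -natrM mulnb.
rewrite sumr_indicator bose_mesnerE // !subrK.
have common z : e x z && e z y = e x z && e y z by rewrite (e_sym z y).
case: eqP => [<-|/eqP x_neq_y].
  by rewrite -(deg x); congr _%:R; apply: eq_card => z; rewrite !inE (e_sym z x) andbb.
case: ifP => [e_xy|/negbT ne_xy].
  by rewrite -(adj_common x y x_neq_y e_xy); congr _%:R; apply: eq_card => z; rewrite !inE common.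
by rewrite -(nadj_common x y x_neq_y ne_xy); congr _%:R; apply: eq_card => z; rewrite !inE common.
Qed.

Lemma srg_eigenvalues (R : rcfType) (p a c : nat) : (c < p)%N ->
  let r := srg_r R p a c in let s := srg_s R p a c in
  [/\ r + s = a%:R - c%:R, r * s = c%:R - p%:R, s < r & s < 0].
Proof.
move=> lt_cp r s; rewrite {}/r {}/s /srg_r /srg_s.
set b : R := a%:R - c%:R; set q := Num.sqrt _.
have disc_gt0 : 0 < b ^+ 2 + 4 * (p%:R - c%:R).
  by rewrite ltr_wpDl ?sqr_ge0 // mulr_gt0 // subr_gt0 ltr_nat.
have q_sqr : q ^+ 2 = b ^+ 2 + 4 * (p%:R - c%:R) by rewrite sqr_sqrtr ?ltW.
have q_gt0 : 0 < q by rewrite sqrtr_gt0.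
have rs_prod : (b + q) / 2 * ((b - q) / 2) = c%:R - p%:R.
  transitivity ((b ^+ 2 - q ^+ 2) / 4); first by field.
  by rewrite q_sqr; field.
have lt_sr : (b - q) / 2 < (b + q) / 2 by rewrite ltr_pM2r ?invr_gt0 // ltrD2l gtrN.
split => //; first by field.
rewrite ltNge; apply/negP => s_ge0.
have := mulr_ge0 (ltW (le_lt_trans s_ge0 lt_sr)) s_ge0.
by rewrite rs_prod subr_ge0 ler_nat leqNgt lt_cp.
Qed.

Theorem mainTheorem4 (R : rcfType) (T : finType) (e : rel T) (n p a c : nat) :
  strongly_regular e n p a c ->
  (0 < c)%N -> (c < p)%N -> (p < n - 1)%N ->
  let r : R := srg_r R p a c in
  let s : R := srg_s R p a c in
  let N : R := n%:R in
  let P : R := p%:R in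
  [/\ 0 <= (r * N + P - r) ^+ 3 + (- N + P - r) ^+ 3 * P + (P - r) ^+ 3 * (N - P - 1),
      0 <= (r * N + P - s) ^+ 3 + (- N + P - s) ^+ 3 * P + (P - s) ^+ 3 * (N - P - 1),
      0 <= (r * N + P - r) ^+ 2 * (r * N + P - s) + (- N + P - r) ^+ 2 * (- N + P - s) * P
           + (P - r) ^+ 2 * (P - s) * (N - P - 1),
      0 <= (r * N + P - r) * (r * N + P - s) ^+ 2 + (- N + P - r) * (- N + P - s) ^+ 2 * P
           + (P - r) * (P - s) ^+ 2 * (N - P - 1)
    & 0 <= (`|s| * N + s - P) ^+ 2 * (r * N + P - s) + (N + s - P) ^+ 2 * (- N + P - s) * P
           + (s - P) ^+ 2 * (P - s) * (N - P - 1)].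
Proof.
move=> srg _ lt_cp lt_p_n1 r s N P.
have [e_irr e_sym adj_row adj_sqr card_T] := strongly_regular_adjacency R srg.
have n_gt0 : (0 < n)%N by case: (n) lt_p_n1.
have [x0 _] : exists x0 : T, x0 \in T by apply/card_gt0P; rewrite card_T.
have cardN : #|T|%:R = N by rewrite card_T.
have [rs_sum rs_prod lt_sr lt_s0] := srg_eigenvalues R a lt_cp.
have idem := bose_mesner_sqr e_sym adj_row adj_sqr cardN x0.
have F := idem _ _ (P - r) rs_sum rs_prod (or_introl erefl).
have G := idem _ _ (P - s) rs_sum rs_prod (or_intror erefl).
have H := idem _ _ (P - s) (etrans (addrC s r) rs_sum) (etrans (mulrC s r) rs_prod)
            (or_introl erefl).
have N_gt0 : 0 < N by rewrite ltr0n.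
have l_gt0 : 0 < N * (r - s) by rewrite mulr_gt0 ?subr_gt0.
have l3_gt0 := mulr_gt0 (mulr_gt0 l_gt0 l_gt0) l_gt0.
have lH_gt0 : 0 < N * (s - r) * (N * (s - r)) * (N * (r - s)).
  by rewrite (_ : N * (s - r) * _ = N * (r - s) * (N * (r - s))) //; ring.
rewrite ltr0_norm //.
split; [ move: (bose_mesner_krein e_irr e_sym adj_row cardN N_gt0 F F F l3_gt0)
       | move: (bose_mesner_krein e_irr e_sym adj_row cardN N_gt0 G G G l3_gt0)
       | move: (bose_mesner_krein e_irr e_sym adj_row cardN N_gt0 F F G l3_gt0)
       | move: (bose_mesner_krein e_irr e_sym adj_row cardN N_gt0 F G G l3_gt0)
       | move: (bose_mesner_krein e_irr e_sym adj_row cardN N_gt0 H H G lH_gt0) ];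
  by congr (_ <= _); rewrite /r /s /N /P; ring.
Qed.
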